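(* The logic $\mathsf{iCB}:=\mathsf{iCC}\oplus(((p\mathrel{\Box\!\!\!\rightarrow} q)\wedge(q\mathrel{\Box\!\!\!\rightarrow} p)\wedge(p\mathrel{\Box\!\!\!\rightarrow} r))\to(q\mathrel{\Box\!\!\!\rightarrow} r))\oplus((p\mathrel{\Box\!\!\!\rightarrow} q)\to(p\mathrel{\Box\!\!\!\rightarrow}(p\mathrel{\Box\!\!\!\rightarrow} q)))$ is sound and complete with respect to the class of cautious conditional frames satisfying, for all worlds $x$ and upsets $a,b$: if $R_a[x]\subseteq b$ and $R_b[x]\subseteq a$ then ${\uparrow}R_a[x]={\uparrow}R_b[x]$; and $(R_a\circ R_a)\subseteq(R_a\circ\leq)$.
   Context: Formulas: $\phi ::= p\mid\bot\mid\phi\wedge\phi\mid\phi\vee\phi\mid\phi\to\phi\mid\phi\mathrel{\Box\!\!\!\rightarrow}\phi$. $\mathsf{ICK}\oplus\Gamma$ is the smallest set containing intuitionistic propositional logic, $\Gamma$, $(p\mathrel{\Box\!\!\!\rightarrow}(q\wedge r))\leftrightarrow((p\mathrel{\Box\!\!\!\rightarrow} q)\wedge(p\mathrel{\Box\!\!\!\rightarrow} r))$ and $(p\mathrel{\Box\!\!\!\rightarrow}\top)\leftrightarrow\top$, closed under uniform substitution, modus ponens and congruence rules for both arguments of $\mathrel{\Box\!\!\!\rightarrow}$. $\mathsf{iCC}=\mathsf{ICK}\oplus(p\mathrel{\Box\!\!\!\rightarrow} p)\oplus(((p\mathrel{\Box\!\!\!\rightarrow} q)\wedge((p\wedge q)\mathrel{\Box\!\!\!\rightarrow}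 r))\to(p\mathrel{\Box\!\!\!\rightarrow} r))\oplus(((p\mathrel{\Box\!\!\!\rightarrow} q)\wedge(p\mathrel{\Box\!\!\!\rightarrow} r))\to((p\wedge q)\mathrel{\Box\!\!\!\rightarrow} r))$. A conditional frame is $(X,\leq,\mathcal{R})$, $(X,\leq)$ a nonempty preorder, $\mathcal{R}=\{R_a\mid a\text{ an upset}\}$ with $(\leq\circ R_a)\subseteq(R_a\circ\leq)$; $x\models\phi\mathrel{\Box\!\!\!\rightarrow}\psi$ iff every $y$ with $xR_{V(\phi)}y$ satisfies $\psi$. A cautious conditional frame satisfies $R_a[x]\subseteq a$ and ($R_a[x]\subseteq b\subseteq a$ implies ${\uparrow}R_a[x]={\uparrow}R_b[x]$) for all $x$ and upsets $a,b$. *)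

Inductive form : Type :=
| Var  : nat -> form
| Bot  : form
| And  : form -> form -> form
| Or   : form -> form -> form
| Imp  : form -> form -> form
| Cond : form -> form -> form.

Definition Top : form := Imp Bot Bot.
Definition Iff (a b : form) : form := And (Imp a b) (Imp b a).

Fixpoint subst (s : nat -> form) (f : form) : form :=
  match f with
  | Var n => s n
  | Bot => Bot
  | And a b => And (subst s a) (subst s b)
  | Or a b => Or (subst s a) (subst s b)
  | Imp a b => Imp (subst s a) (subst s b)
  | Cond a b => Cond (subst s a) (subst s b)
  end.

Definition p0 : form := Var 0.
Definition q0 : form := Var 1.
Definition r0 : form := Var 2.

Inductive ICK_plus (G : form -> Prop) : form -> Prop :=
| ax_K  : forall a b, ICK_plus G (Imp a (Imp b a))
| ax_S  : forall a b c,
    ICK_plus G (Imp (Imp a (Imp b c)) (Imp (Imp a b) (Imp a c)))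
| ax_andE1 : forall a b, ICK_plus G (Imp (And a b) a)
| ax_andE2 : forall a b, ICK_plus G (Imp (And a b) b)
| ax_andI  : forall a b, ICK_plus G (Imp a (Imp b (And a b)))
| ax_orI1  : forall a b, ICK_plus G (Imp a (Or a b))
| ax_orI2  : forall a b, ICK_plus G (Imp b (Or a b))
| ax_orE   : forall a b c,
    ICK_plus G (Imp (Imp a c) (Imp (Imp b c) (Imp (Or a b) c)))
| ax_botE  : forall a, ICK_plus G (Imp Bot a)
| ax_G : forall f, G f -> ICK_plus G f
| ax_CM : ICK_plus G (Iff (Cond p0 (And q0 r0)) (And (Cond p0 q0) (Cond p0 r0)))
| ax_CN : ICK_plus G (Iff (Cond p0 Top) Top)
| rule_subst : forall s f, ICK_plus G f -> ICK_plus G (subst s f)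
| rule_MP : forall a b, ICK_plus G (Imp a b) -> ICK_plus G a -> ICK_plus G b
| rule_congL : forall a b c, ICK_plus G (Iff a b) ->
    ICK_plus G (Iff (Cond a c) (Cond b c))
| rule_congR : forall a b c, ICK_plus G (Iff a b) ->
    ICK_plus G (Iff (Cond c a) (Cond c b)).

Definition ax_ID : form := Cond p0 p0.
Definition ax_CUT : form :=
  Imp (And (Cond p0 q0) (Cond (And p0 q0) r0)) (Cond p0 r0).
Definition ax_CMON : form :=
  Imp (And (Cond p0 q0) (Cond p0 r0)) (Cond (And p0 q0) r0).
Definition ax_CSO : form :=
  Imp (And (Cond p0 q0) (And (Cond q0 p0) (Cond p0 r0))) (Cond q0 r0).
Definition ax_4 : form :=
  Imp (Cond p0 q0) (Cond p0 (Cond p0 q0)).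

Definition iCC_axioms (f : form) : Prop :=
  f = ax_ID \/ f = ax_CUT \/ f = ax_CMON.
Definition iCB_axioms (f : form) : Prop :=
  iCC_axioms f \/ f = ax_CSO \/ f = ax_4.

Definition iCB : form -> Prop := ICK_plus iCB_axioms.

Definition upset {X : Type} (le : X -> X -> Prop) (a : X -> Prop) : Prop :=
  forall x y, le x y -> a x -> a y.

Definition comp {X : Type} (S T : X -> X -> Prop) : X -> X -> Prop :=
  fun x z => exists y, S x y /\ T y z.

Definition rel_incl {X : Type} (S T : X -> X -> Prop) : Prop :=
  forall x y, S x y -> T x y.

(* R_a is given for every predicate a, but only its values on upsets matter
   (all conditions below and the semantics only use upsets). *)
Record cframe : Type := {
  W : Type;
  le : W -> W -> Prop;
  R : (W -> Prop) -> W -> W -> Prop;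
  W_inhabited : inhabited W;
  le_refl : forall x, le x x;
  le_trans : forall x y z, le x y -> le y z -> le x z;
  R_mono : forall a, upset le a -> rel_incl (comp le (R a)) (comp (R a) le)
}.

Definition image (F : cframe) (a : W F -> Prop) (x : W F) : W F -> Prop :=
  fun y => R F a x y.
Definition up (F : cframe) (S : W F -> Prop) : W F -> Prop :=
  fun z => exists y, S y /\ le F y z.
Definition subset {X : Type} (S T : X -> Prop) : Prop := forall x, S x -> T x.
Definition seteq {X : Type} (S T : X -> Prop) : Prop := forall x, S x <-> T x.

Definition cautious (F : cframe) : Prop :=
  forall x (a b : W F -> Prop), upset (le F) a -> upset (le F) b ->
    subset (image F a x) a /\
    (subset (image F a x) b -> subset b a ->
       seteq (up F (image F a x)) (up F (image F b x))).

Definition iCB_frame_cond (F : cframe) : Prop :=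
  (forall x (a b : W F -> Prop), upset (le F) a -> upset (le F) b ->
     subset (image F a x) b -> subset (image F b x) a ->
     seteq (up F (image F a x)) (up F (image F b x))) /\
  (forall a : W F -> Prop, upset (le F) a ->
     rel_incl (comp (R F a) (R F a)) (comp (R F a) (le F))).

Fixpoint forces (F : cframe) (V : nat -> W F -> Prop) (f : form) : W F -> Prop :=
  match f with
  | Var n => V n
  | Bot => fun _ => False
  | And a b => fun x => forces F V a x /\ forces F V b x
  | Or a b => fun x => forces F V a x \/ forces F V b x
  | Imp a b => fun x => forall y, le F x y -> forces F V a y -> forces F V b y
  | Cond a b => fun x => forall y, R F (forces F V a) x y -> forces F V b y
  end.

Definition valuation (F : cframe) (V : nat -> W F -> Prop) : Prop :=
  forall n, upset (le F) (V n).

Definition valid (F : cframe) (f : form) : Prop :=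
  forall V, valuation F V -> forall x, forces F V f x.

From Stdlib Require Import Classical FunctionalExtensionality PropExtensionality Cantor Lia.

(* Soundness is an induction over derivations: CUT and CMON hold by cautiousness applied to
   the upsets ⟦p⟧ and ⟦p ∧ q⟧, CSO by the reciprocity condition, and 4 by
   (R_a ∘ R_a) ⊆ (R_a ∘ ≤).

   Completeness goes through the canonical frame of prime theories ordered by inclusion.
   Write box w c for {f | c □→ f ∈ w}, and say that c captures a set a of prime theories
   at w if every prime extension of box w c lies in a and every member of a contains c.
   R_a[w] is the set of prime extensions of box w c for any c capturing a (by CSO this
   does not depend on c), and a itself when no formula captures a.  By ID a formula
   captures its own truth set, so the truth lemma for □→ reduces to box w c being the
   intersection of its prime extensions.  CSO also yields cautiousness and reciprocity,
   4 yields the transitivity condition. *)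

Lemma subset_refl {X : Type} (S : X -> Prop) : subset S S.
Proof. intros x Hx; exact Hx. Qed.

Lemma subset_trans {X : Type} (S T U : X -> Prop) :
  subset S T -> subset T U -> subset S U.
Proof. intros HST HTU x Hx; exact (HTU x (HST x Hx)). Qed.

Lemma up_image_seteq (F : cframe) (a b : W F -> Prop) (x : W F) :
  seteq (image F a x) (image F b x) -> seteq (up F (image F a x)) (up F (image F b x)).
Proof.
  intros Hab z; split; intros [y [Hy Hyz]]; exists y; split; try exact Hyz; apply Hab, Hy.
Qed.

Lemma up_image_transfer (F : cframe) (a b r : W F -> Prop) (x : W F) :
  upset (le F) r -> subset (up F (image F b x)) (up F (image F a x)) ->
  subset (image F a x) r -> subset (image F b x) r.
Proof.
  intros Hr Hba Har y Hy.
  destruct (Hba y (ex_intro _ y (conj Hy (le_refl F y)))) as [z [Hz Hzy]].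
  exact (Hr z y Hzy (Har z Hz)).
Qed.

Section Soundness.
Variable F : cframe.

Lemma forces_upset V : valuation F V -> forall f, upset (le F) (forces F V f).
Proof.
  intros HV f; induction f as [n| |f IHf g IHg|f IHf g IHg|f IHf g IHg|f IHf g IHg];
    simpl; intros x y Hxy Hx.
  - exact (HV n x y Hxy Hx).
  - exact Hx.
  - destruct Hx; split; eauto.
  - destruct Hx; [left|right]; eauto.
  - intros z Hyz. apply Hx. exact (le_trans F x y z Hxy Hyz).
  - intros z Hz.
    destruct (R_mono F (forces F V f) IHf x z (ex_intro _ y (conj Hxy Hz))) as [u [Hxu Huz]].
    exact (IHg u z Huz (Hx u Hxu)).
Qed.

Lemma forces_subst V s f :
  forces F V (subst s f) = forces F (fun n => forces F V (s n)) f.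
Proof. induction f; simpl; try rewrite IHf1, IHf2; reflexivity. Qed.

Lemma valid_iff_forces_eq a b :
  valid F (Iff a b) -> forall V, valuation F V -> forces F V a = forces F V b.
Proof.
  intros Hab V HV. apply functional_extensionality; intros x.
  apply propositional_extensionality.
  destruct (Hab V HV x) as [Hl Hr]. split; [apply Hl | apply Hr]; apply le_refl.
Qed.

Lemma ICK_plus_sound (Γ : form -> Prop) :
  (forall g, Γ g -> valid F g) -> forall f, ICK_plus Γ f -> valid F f.
Proof.
  intros HΓ f Hf.
  induction Hf as [a b|a b c|a b|a b|a b|a b|a b|a b c|a|g Hg| | |s f _ IH
                  |a b _ IHab _ IHa|a b c _ IH|a b c _ IH];
    intros V HV x; simpl; pose proof (forces_upset V HV) as Hup.
  - intros y _ Ha z Hyz _. exact (Hup a y z Hyz Ha).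
  - intros y _ Habc z Hyz Hab u Hzu Ha.
    assert (Hyu : le F y u) by exact (le_trans F y z u Hyz Hzu).
    exact (Habc u Hyu Ha u (le_refl F u) (Hab u Hzu Ha)).
  - intros y _ [Ha _]; exact Ha.
  - intros y _ [_ Hb]; exact Hb.
  - intros y _ Ha z Hyz Hb. exact (conj (Hup a y z Hyz Ha) Hb).
  - intros y _ Ha; left; exact Ha.
  - intros y _ Hb; right; exact Hb.
  - intros y _ Hac z Hyz Hbc u Hzu [Ha|Hb].
    + exact (Hac u (le_trans F y z u Hyz Hzu) Ha).
    + exact (Hbc u Hzu Hb).
  - intros y _ [].
  - exact (HΓ g Hg V HV x).
  - split.
    + intros y _ H. split; intros z Hz; apply H, Hz.
    + intros y _ [H1 H2] z Hz. exact (conj (H1 z Hz) (H2 z Hz)).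
  - split.
    + intros y _ _ z _ [].
    + intros y _ _ z _ z' _ [].
  - rewrite forces_subst. apply IH. intros n; apply Hup.
  - exact (IHab V HV x x (le_refl F x) (IHa V HV x)).
  - rewrite (valid_iff_forces_eq a b IH V HV). split; intros y _ H; exact H.
  - rewrite (valid_iff_forces_eq a b IH V HV). split; intros y _ H; exact H.
Qed.

Lemma valid_ID : cautious F -> valid F ax_ID.
Proof. intros HF V HV x. exact (proj1 (HF x (V 0) (V 0) (HV 0) (HV 0))). Qed.

Lemma cautious_up_image_and V p q y :
  cautious F -> valuation F V -> forces F V (Cond p q) y ->
  seteq (up F (image F (forces F V p) y)) (up F (image F (forces F V (And p q)) y)).
Proof.
  intros HF HV Hpq.
  destruct (HF y (forces F V p) (forces F V (And p q))
              (forces_upset V HV p) (forces_upset V HV (And p q))) as [Hsub Heq].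
  apply Heq.
  - intros z Hz; exact (conj (Hsub z Hz) (Hpq z Hz)).
  - intros z [Hz _]; exact Hz.
Qed.

Lemma valid_CUT : cautious F -> valid F ax_CUT.
Proof.
  intros HF V HV x y _ [Hpq Hpqr].
  apply (up_image_transfer F (forces F V (And p0 q0))); [apply forces_upset, HV | | exact Hpqr].
  intros z; apply (cautious_up_image_and V p0 q0 y HF HV Hpq).
Qed.

Lemma valid_CMON : cautious F -> valid F ax_CMON.
Proof.
  intros HF V HV x y _ [Hpq Hpr].
  apply (up_image_transfer F (forces F V p0)); [apply forces_upset, HV | | exact Hpr].
  intros z; apply (cautious_up_image_and V p0 q0 y HF HV Hpq).
Qed.

Lemma valid_CSO : iCB_frame_cond F -> valid F ax_CSO.
Proof.
  intros [Hrecip _] V HV x y _ [Hpq [Hqp Hpr]].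
  apply (up_image_transfer F (forces F V p0)); [apply HV | | exact Hpr].
  intros z; apply (Hrecip y (forces F V p0) (forces F V q0) (HV 0) (HV 1) Hpq Hqp).
Qed.

Lemma valid_4 : iCB_frame_cond F -> valid F ax_4.
Proof.
  intros [_ Htrans] V HV x y _ Hpq z Hyz u Hzu.
  destruct (Htrans (V 0) (HV 0) y u (ex_intro _ z (conj Hyz Hzu))) as [v [Hyv Hvu]].
  exact (HV 1 v u Hvu (Hpq v Hyv)).
Qed.

End Soundness.

Theorem iCB_sound (F : cframe) (f : form) :
  cautious F -> iCB_frame_cond F -> iCB f -> valid F f.
Proof.
  intros HF Hcond. apply ICK_plus_sound.
  intros g [[-> | [-> | ->]] | [-> | ->]].
  - apply valid_ID, HF.
  - apply valid_CUT, HF.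
  - apply valid_CMON, HF.
  - apply valid_CSO, Hcond.
  - apply valid_4, Hcond.
Qed.

Definition pair_code (m n : nat) : nat := Cantor.to_nat (m, n).

Lemma pair_code_inj m n m' n' : pair_code m n = pair_code m' n' -> m = m' /\ n = n'.
Proof.
  intros H. apply (f_equal Cantor.of_nat) in H.
  unfold pair_code in H; rewrite !Cantor.cancel_of_to in H.
  injection H; auto.
Qed.

Fixpoint form_code (f : form) : nat :=
  match f with
  | Var n => pair_code 0 n
  | Bot => pair_code 1 0
  | And a b => pair_code 2 (pair_code (form_code a) (form_code b))
  | Or a b => pair_code 3 (pair_code (form_code a) (form_code b))
  | Imp a b => pair_code 4 (pair_code (form_code a) (form_code b))
  | Cond a b => pair_code 5 (pair_code (form_code a) (form_code b))
  end.

Lemma form_code_inj f g : form_code f = form_code g -> f = g.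
Proof.
  revert g; induction f; destruct g; simpl; intros H;
    repeat match goal with
    | H : pair_code _ _ = pair_code _ _ |- _ => apply pair_code_inj in H; destruct H
    end;
    try discriminate; subst; f_equal; auto.
Qed.

Definition subst3 (a b c : form) : nat -> form :=
  fun n => match n with 0 => a | 1 => b | _ => c end.

Section Canonical.
Variable Γ : form -> Prop.

Inductive deriv (H : form -> Prop) : form -> Prop :=
| deriv_hyp f : H f -> deriv H f
| deriv_thm f : ICK_plus Γ f -> deriv H f
| deriv_mp a b : deriv H (Imp a b) -> deriv H a -> deriv H b.

Definition add (H : form -> Prop) (a : form) : form -> Prop := fun f => H f \/ f = a.

Lemma thm_imp_refl a : ICK_plus Γ (Imp a a).
Proof.
  exact (rule_MP _ _ _ (rule_MP _ _ _ (ax_S Γ a (Imp a a) a) (ax_K Γ a (Imp a a)))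
           (ax_K Γ a a)).
Qed.

Lemma deriv_added H a : deriv (add H a) a.
Proof. apply deriv_hyp; right; reflexivity. Qed.

Lemma deriv_mono H H' f : subset H H' -> deriv H f -> deriv H' f.
Proof.
  intros HH'; induction 1.
  - apply deriv_hyp, HH'; assumption.
  - apply deriv_thm; assumption.
  - eapply deriv_mp; eassumption.
Qed.

Lemma deduction H a b : deriv (add H a) b -> deriv H (Imp a b).
Proof.
  induction 1 as [f [Hf | ->] | f Hf | c d _ IHcd _ IHc].
  - apply deriv_mp with f; [apply deriv_thm, ax_K | apply deriv_hyp, Hf].
  - apply deriv_thm, thm_imp_refl.
  - apply deriv_mp with f; [apply deriv_thm, ax_K | apply deriv_thm, Hf].
  - apply deriv_mp with (Imp a c); [|exact IHc].
    apply deriv_mp with (Imp a (Imp c d)); [apply deriv_thm, ax_S | exact IHcd].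
Qed.

Lemma deriv_empty f : deriv (fun _ => False) f -> ICK_plus Γ f.
Proof.
  induction 1; [contradiction | assumption | eapply rule_MP; eassumption].
Qed.

Lemma thm_imp_intro a b : deriv (add (fun _ => False) a) b -> ICK_plus Γ (Imp a b).
Proof. intros H; apply deriv_empty, deduction, H. Qed.

Lemma deriv_and H a b : deriv H (And a b) <-> deriv H a /\ deriv H b.
Proof.
  split.
  - intros Hab; split; eapply deriv_mp; try exact Hab; apply deriv_thm;
      [apply ax_andE1 | apply ax_andE2].
  - intros [Ha Hb].
    exact (deriv_mp _ _ _ (deriv_mp _ _ _ (deriv_thm _ _ (ax_andI Γ a b)) Ha) Hb).
Qed.

Lemma thm_iff_intro a b :
  ICK_plus Γ (Imp a b) -> ICK_plus Γ (Imp b a) -> ICK_plus Γ (Iff a b).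
Proof. intros Hab Hba; apply deriv_empty, deriv_and; split; apply deriv_thm; assumption. Qed.

Lemma thm_iff_elim a b :
  ICK_plus Γ (Iff a b) -> ICK_plus Γ (Imp a b) /\ ICK_plus Γ (Imp b a).
Proof.
  intros Hab. apply (deriv_thm (fun _ => False)), deriv_and in Hab.
  destruct Hab; split; apply deriv_empty; assumption.
Qed.

Lemma thm_cond_and c a b :
  ICK_plus Γ (Iff (Cond c (And a b)) (And (Cond c a) (Cond c b))).
Proof. exact (rule_subst _ (subst3 c a b) _ (ax_CM Γ)). Qed.

Lemma thm_cond_nec c t : ICK_plus Γ t -> ICK_plus Γ (Cond c t).
Proof.
  intros Ht.
  assert (Htop : ICK_plus Γ (Iff t Top)).
  { apply thm_iff_intro; apply thm_imp_intro, deriv_thm; [apply thm_imp_refl | exact Ht]. }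
  destruct (thm_iff_elim _ _ (rule_congR _ _ _ c Htop)) as [_ Hback].
  destruct (thm_iff_elim (Cond c Top) Top (rule_subst _ (fun _ => c) _ (ax_CN Γ)))
    as [_ Hnec].
  exact (rule_MP _ _ _ Hback (rule_MP _ _ _ Hnec (thm_imp_refl Bot))).
Qed.

Lemma thm_cond_mono c a b : ICK_plus Γ (Imp a b) -> ICK_plus Γ (Imp (Cond c a) (Cond c b)).
Proof.
  intros Hab.
  assert (Haab : ICK_plus Γ (Iff a (And a b))).
  { apply thm_iff_intro; apply thm_imp_intro.
    - apply deriv_and; split; [|eapply deriv_mp; [apply deriv_thm, Hab|]]; apply deriv_added.
    - exact (proj1 (proj1 (deriv_and _ a b) (deriv_added _ _))). }
  destruct (thm_iff_elim _ _ (rule_congR _ _ _ c Haab)) as [Hto _].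
  destruct (thm_iff_elim _ _ (thm_cond_and c a b)) as [Hsplit _].
  apply thm_imp_intro.
  assert (Hboth : deriv (add (fun _ => False) (Cond c a)) (And (Cond c a) (Cond c b))).
  { apply (deriv_mp _ _ _ (deriv_thm _ _ Hsplit)), (deriv_mp _ _ _ (deriv_thm _ _ Hto)).
    apply deriv_added. }
  exact (proj2 (proj1 (deriv_and _ _ _) Hboth)).
Qed.

Record prime_theory : Type := {
  th : form -> Prop;
  th_closed : forall f, deriv th f -> th f;
  th_consistent : ~ th Bot;
  th_prime : forall a b, th (Or a b) -> th a \/ th b }.

Section Lindenbaum.
Variables (H : form -> Prop) (phi : form).
Hypothesis H_phi : ~ deriv H phi.

Fixpoint stage (n : nat) : form -> Prop :=
  match n with
  | 0 => H
  | S n => fun f => stage n f \/ (form_code f = n /\ ~ deriv (add (stage n) f) phi)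
  end.

Definition limit : form -> Prop := fun f => exists n, stage n f.

Lemma stage_mono n m : n <= m -> subset (stage n) (stage m).
Proof. induction 1; [apply subset_refl | intros f Hf; left; auto]. Qed.

Lemma stage_not_deriv n : ~ deriv (stage n) phi.
Proof.
  induction n as [|n IH]; [exact H_phi|]. intros Hn.
  destruct (classic (exists f, form_code f = n /\ ~ deriv (add (stage n) f) phi))
    as [[f [Hf Hfn]] | Hnone].
  - apply Hfn. revert Hn; apply deriv_mono.
    intros g [Hg | [Hg _]]; [left; exact Hg | right; apply form_code_inj; congruence].
  - apply IH. revert Hn; apply deriv_mono.
    intros g [Hg | Hg]; [exact Hg | exfalso; apply Hnone; exists g; exact Hg].
Qed.

Lemma limit_deriv_stage f : deriv limit f -> exists n, deriv (stage n) f.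
Proof.
  induction 1 as [f [n Hn] | f Hf | a b _ [n Hn] _ [m Hm]].
  - exists n; apply deriv_hyp, Hn.
  - exists 0; apply deriv_thm, Hf.
  - exists (max n m). apply deriv_mp with a.
    + revert Hn; apply deriv_mono, stage_mono; lia.
    + revert Hm; apply deriv_mono, stage_mono; lia.
Qed.

Lemma limit_not_deriv : ~ deriv limit phi.
Proof. intros Hd; destruct (limit_deriv_stage phi Hd) as [n Hn]; exact (stage_not_deriv n Hn). Qed.

Lemma limit_imp_of_not_mem f : ~ limit f -> deriv limit (Imp f phi).
Proof.
  intros Hf.
  destruct (classic (deriv (add (stage (form_code f)) f) phi)) as [Hd | Hd].
  - apply deduction in Hd. revert Hd; apply deriv_mono. intros g Hg; exists (form_code f); exact Hg.
  - exfalso; apply Hf. exists (S (form_code f)); right; auto.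
Qed.

Lemma limit_closed f : deriv limit f -> limit f.
Proof.
  intros Hd. apply NNPP; intros Hf. apply limit_not_deriv.
  exact (deriv_mp _ _ _ (limit_imp_of_not_mem f Hf) Hd).
Qed.

Lemma limit_consistent : ~ limit Bot.
Proof.
  intros Hbot; apply limit_not_deriv.
  exact (deriv_mp _ _ _ (deriv_thm _ _ (ax_botE Γ phi)) (deriv_hyp _ _ Hbot)).
Qed.

Lemma limit_prime a b : limit (Or a b) -> limit a \/ limit b.
Proof.
  intros Hab. apply NNPP; intros Hn. apply limit_not_deriv.
  apply (deriv_mp _ (Or a b)); [|exact (deriv_hyp _ _ Hab)].
  apply (deriv_mp _ (Imp b phi)); [|apply limit_imp_of_not_mem; tauto].
  apply (deriv_mp _ (Imp a phi)); [|apply limit_imp_of_not_mem; tauto].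
  apply deriv_thm, ax_orE.
Qed.

End Lindenbaum.

Lemma lindenbaum H phi :
  ~ deriv H phi -> exists w : prime_theory, subset H (th w) /\ ~ th w phi.
Proof.
  intros H_phi.
  exists (Build_prime_theory (limit H phi) (limit_closed H phi H_phi)
            (limit_consistent H phi H_phi) (limit_prime H phi H_phi)).
  split.
  - intros f Hf; exists 0; exact Hf.
  - intros Hphi; apply (limit_not_deriv H phi H_phi), deriv_hyp, Hphi.
Qed.

Lemma th_thm (w : prime_theory) f : ICK_plus Γ f -> th w f.
Proof. intros Hf; apply th_closed, deriv_thm, Hf. Qed.

Lemma th_mp (w : prime_theory) a b : th w (Imp a b) -> th w a -> th w b.
Proof.
  intros Hab Ha; apply th_closed.
  exact (deriv_mp _ _ _ (deriv_hyp _ _ Hab) (deriv_hyp _ _ Ha)).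
Qed.

Lemma th_and (w : prime_theory) a b : th w (And a b) <-> th w a /\ th w b.
Proof.
  split.
  - intros Hab. apply (deriv_hyp (th w)), deriv_and in Hab.
    destruct Hab; split; apply th_closed; assumption.
  - intros [Ha Hb]; apply th_closed, deriv_and; split; apply deriv_hyp; assumption.
Qed.

Definition box (w : prime_theory) (c : form) : form -> Prop := fun f => th w (Cond c f).

Lemma box_closed w c f : deriv (box w c) f -> box w c f.
Proof.
  induction 1 as [f Hf | f Hf | a b _ IHab _ IHa]; unfold box in *.
  - exact Hf.
  - apply th_thm, thm_cond_nec, Hf.
  - apply (th_mp w (Cond c (And (Imp a b) a))).
    + apply th_thm, thm_cond_mono, thm_imp_intro.
      destruct (proj1 (deriv_and _ _ _) (deriv_added (fun _ => False) (And (Imp a b) a)))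
        as [Hab Ha].
      exact (deriv_mp _ _ _ Hab Ha).
    + apply (th_mp w _ _ (th_thm w _ (proj2 (thm_iff_elim _ _ (thm_cond_and c _ _))))).
      apply th_and; split; assumption.
Qed.

Lemma box_of_prime_extensions w c f :
  (forall v : prime_theory, subset (box w c) (th v) -> th v f) -> box w c f.
Proof.
  intros Hext. apply NNPP; intros Hf.
  destruct (lindenbaum (box w c) f) as [v [Hv Hvf]].
  - intros Hd; apply Hf, box_closed, Hd.
  - exact (Hvf (Hext v Hv)).
Qed.

Definition captures (w : prime_theory) (c : form) (a : prime_theory -> Prop) : Prop :=
  (forall v : prime_theory, subset (box w c) (th v) -> a v) /\
  (forall v, a v -> th v c).

Definition canon_R (a : prime_theory -> Prop) (w v : prime_theory) : Prop :=
  (exists c, captures w c a /\ subset (box w c) (th v)) \/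
  (~ (exists c, captures w c a) /\ a v).

Lemma captures_antitone w w' c a : subset (th w) (th w') -> captures w c a -> captures w' c a.
Proof.
  intros Hw [Hext Hc]; split; [|exact Hc].
  intros v Hv; apply Hext; intros f Hf; apply Hv, Hw, Hf.
Qed.

Lemma canon_R_sub a w v : canon_R a w v -> a v.
Proof. intros [[c [[Hext _] Hv]] | [_ Hv]]; [apply Hext, Hv | exact Hv]. Qed.

Section Frame.
Hypothesis thm_ID : ICK_plus Γ ax_ID.
Hypothesis thm_CSO : ICK_plus Γ ax_CSO.
Hypothesis thm_4 : ICK_plus Γ ax_4.

Lemma box_extension_mem w c v : subset (box w c) (th v) -> th v c.
Proof. intros Hv; apply Hv, th_thm, (rule_subst _ (subst3 c c c) _ thm_ID). Qed.

Lemma box_trans w u v c :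
  subset (box w c) (th u) -> subset (box u c) (th v) -> subset (box w c) (th v).
Proof.
  intros Hu Hv f Hf. apply Hv, Hu.
  exact (th_mp w _ _ (th_thm w _ (rule_subst _ (subst3 c f f) _ thm_4)) Hf).
Qed.

Lemma box_seteq_of_mutual w c d :
  (forall v : prime_theory, subset (box w c) (th v) -> th v d) ->
  (forall v : prime_theory, subset (box w d) (th v) -> th v c) ->
  seteq (box w c) (box w d).
Proof.
  intros Hcd Hdc. apply box_of_prime_extensions in Hcd, Hdc.
  assert (Hso : forall c d f, box w c d -> box w d c -> box w c f -> box w d f).
  { intros c' d' f H1 H2 H3.
    apply (th_mp w _ _ (th_thm w _ (rule_subst _ (subst3 c' d' f) _ thm_CSO))).
    apply th_and; split; [|apply th_and; split]; assumption. }
  intros f; split; apply Hso; assumption.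
Qed.

Lemma canon_R_captured a w c v :
  captures w c a -> canon_R a w v <-> subset (box w c) (th v).
Proof.
  intros Hc. split.
  - intros [[d [Hd Hv]] | [Hnone _]]; [|exfalso; apply Hnone; exists c; exact Hc].
    intros f Hf. apply Hv, (box_seteq_of_mutual w c d); [| |exact Hf].
    + intros u Hu; apply Hd, Hc, Hu.
    + intros u Hu; apply Hc, Hd, Hu.
  - intros Hv; left; exists c; split; assumption.
Qed.

Lemma canon_R_antitone a w w' v :
  subset (th w) (th w') -> canon_R a w' v -> canon_R a w v.
Proof.
  intros Hw Hv.
  destruct (classic (exists c, captures w c a)) as [[c Hc] | Hnone].
  - apply (canon_R_captured a w c v Hc).
    apply (canon_R_captured a w' c v (captures_antitone w w' c a Hw Hc)) in Hv.
    exact (subset_trans _ _ _ (fun f Hf => Hw _ Hf) Hv).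
  - right; split; [exact Hnone | exact (canon_R_sub a w' v Hv)].
Qed.

Lemma canon_R_trans a w u v : canon_R a w u -> canon_R a u v -> canon_R a w v.
Proof.
  intros Hu Hv.
  destruct (classic (exists c, captures w c a)) as [[c Hc] | Hnone].
  - apply (canon_R_captured a w c u Hc) in Hu. apply (canon_R_captured a w c v Hc).
    assert (Hcu : captures u c a).
    { split; [|apply Hc]. intros v' Hv'. apply Hc, (box_trans w u v' c Hu Hv'). }
    apply (canon_R_captured a u c v Hcu) in Hv.
    exact (box_trans w u v c Hu Hv).
  - right; split; [exact Hnone | exact (canon_R_sub a u v Hv)].
Qed.

Lemma canon_R_mutual a b w :
  (forall v, canon_R a w v -> b v) -> (forall v, canon_R b w v -> a v) ->
  seteq (canon_R a w) (canon_R b w).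
Proof.
  intros Hab Hba.
  destruct (classic (exists c, captures w c a)) as [[c Hc] | Hna];
  destruct (classic (exists d, captures w d b)) as [[d Hd] | Hnb].
  - assert (Hcd : seteq (box w c) (box w d)).
    { apply box_seteq_of_mutual.
      - intros u Hu. apply Hd, Hab, (canon_R_captured a w c u Hc), Hu.
      - intros u Hu. apply Hc, Hba, (canon_R_captured b w d u Hd), Hu. }
    intros v. rewrite (canon_R_captured a w c v Hc), (canon_R_captured b w d v Hd).
    split; intros Hv f Hf; apply Hv, Hcd, Hf.
  - exfalso; apply Hnb. exists c; split.
    + intros u Hu. apply Hab, (canon_R_captured a w c u Hc), Hu.
    + intros u Hu. apply Hc, Hba. right; split; assumption.
  - exfalso; apply Hna. exists d; split.
    + intros u Hu. apply Hba, (canon_R_captured b w d u Hd), Hu.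
    + intros u Hu. apply Hd, Hab. right; split; assumption.
  - intros v; split; intros Hv; right; split; try assumption.
    + apply Hab, Hv.
    + apply Hba, Hv.
Qed.

Lemma canon_R_mono a : rel_incl (comp (fun u v => subset (th u) (th v)) (canon_R a))
                                (comp (canon_R a) (fun u v => subset (th u) (th v))).
Proof.
  intros w v [w' [Hw Hv]]. exists v.
  split; [exact (canon_R_antitone a w w' v Hw Hv) | apply subset_refl].
Qed.

Definition canon (h : inhabited prime_theory) : cframe := {|
  W := prime_theory;
  le u v := subset (th u) (th v);
  R := canon_R;
  W_inhabited := h;
  le_refl u := subset_refl (th u);
  le_trans u v w := subset_trans (th u) (th v) (th w);
  R_mono a _ := canon_R_mono a |}.

Lemma canon_cautious h : cautious (canon h).
Proof.
  intros w a b _ _; split.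
  - exact (canon_R_sub a w).
  - intros Hab Hba. apply up_image_seteq, canon_R_mutual; [exact Hab|].
    intros v Hv; exact (Hba v (canon_R_sub b w v Hv)).
Qed.

Lemma canon_frame_cond h : iCB_frame_cond (canon h).
Proof.
  split.
  - intros w a b _ _ Hab Hba. apply up_image_seteq, canon_R_mutual; assumption.
  - intros a _ w v [u [Hu Hv]]. exists v.
    split; [exact (canon_R_trans a w u v Hu Hv) | apply subset_refl].
Qed.

Definition canon_val (h : inhabited prime_theory) : nat -> W (canon h) -> Prop :=
  fun n w => th w (Var n).

Lemma canon_val_valuation h : valuation (canon h) (canon_val h).
Proof. intros n u v Huv Hu; exact (Huv _ Hu). Qed.

Lemma canon_forces h f w : forces (canon h) (canon_val h) f w <-> th w f.
Proof.
  revert w; induction f as [n| |a IHa b IHb|a IHa b IHb|a IHa b IHb|a IHa b IHb];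
    intros w; simpl.
  - reflexivity.
  - split; [contradiction | apply th_consistent].
  - rewrite th_and, IHa, IHb; reflexivity.
  - rewrite IHa, IHb. split; [|apply th_prime].
    intros [Ha | Hb]; apply th_closed.
    + exact (deriv_mp _ _ _ (deriv_thm _ _ (ax_orI1 Γ a b)) (deriv_hyp _ _ Ha)).
    + exact (deriv_mp _ _ _ (deriv_thm _ _ (ax_orI2 Γ a b)) (deriv_hyp _ _ Hb)).
  - split.
    + intros Hab. apply NNPP; intros Hn.
      destruct (lindenbaum (add (th w) a) b) as [v [Hv Hvb]].
      * intros Hd; apply Hn, th_closed, deduction, Hd.
      * apply Hvb, IHb, Hab.
        -- intros f Hf; apply Hv; left; exact Hf.
        -- apply IHa, Hv; right; reflexivity.
    + intros Hab v Hwv Ha. apply IHb, (th_mp v a b); [apply Hwv, Hab | apply IHa, Ha].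
  - assert (Hc : captures w a (forces (canon h) (canon_val h) a)).
    { split; intros v Hv; apply IHa; [exact (box_extension_mem w a v Hv) | exact Hv]. }
    split.
    + intros Hab. apply box_of_prime_extensions. intros v Hv.
      apply IHb, Hab, (canon_R_captured _ w a v Hc), Hv.
    + intros Hab v Hv. apply (canon_R_captured _ w a v Hc) in Hv. exact (proj2 (IHb v) (Hv b Hab)).
Qed.

Theorem completeness f :
  (forall F : cframe, cautious F -> iCB_frame_cond F -> valid F f) -> ICK_plus Γ f.
Proof.
  intros Hvalid. apply NNPP; intros Hf.
  destruct (lindenbaum (fun _ => False) f) as [w [_ Hw]].
  - intros Hd; apply Hf, deriv_empty, Hd.
  - apply Hw, (canon_forces (inhabits w)), Hvalid.
    + apply canon_cautious.
    + apply canon_frame_cond.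
    + apply canon_val_valuation.
Qed.

End Frame.
End Canonical.

Theorem theorem6p11 : forall f : form,
  iCB f <-> (forall F : cframe, cautious F -> iCB_frame_cond F -> valid F f).
Proof.
  intros f; split.
  - intros Hf F HF Hcond; exact (iCB_sound F f HF Hcond Hf).
  - apply completeness; apply ax_G; unfold iCB_axioms, iCC_axioms; auto.
Qed.
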